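(* Let $P$ be any product rule. Let $(f_a)_{a\in\Sigma}$ be a tuple of $P$-finite series and let $g$ be a series with $\delta_ag=f_a$ for all $a\in\Sigma$. Then $g$ is $P$-finite.
   Context: Let $\Sigma$ be a finite alphabet, $\Sigma^*$ the finite words with empty word $\varepsilon$. A series is $f:\Sigma^*\to\mathbb Q$, $f_w=f(w)$; series form a $\mathbb Q$-vector space under pointwise operations with zero $\mathbb 0$. For $a\in\Sigma$, $\delta_af$ is $w\mapsto f(aw)$. Terms over $X$: generated by $u,v::=x\mid 0\mid c\cdot u\mid u+v\mid u*v$. A product rule is a term $P$ over $\{x,\dot x,y,\dot y\}$. The $P$-product $*$ and semantics $[\![u]\!]_\varrho$ are the unique pair with $(f*g)_\varepsilon=f_\varepsilon g_\varepsilon$, $\delta_a(f*g)=[\![P]\!]_{[x\mapsto f,\dot x\mapsto\delta_af,y\mapsto g,\dot y\mapsto\delta_ag]}$, and $[\![\cdot]\!]_\varrho$ interpreting variables via $\varrho$, constructors by zero, scalar multiplication, addition, $*$. $P$-finite: $A(g_1,\dots,g_k)$ is the smallest set of series containing $\mathbb 0,g_1,\dots,g_k$ closed under scalar multiplication, $+$, $*$; $f$ is $P$-finite if there are $g_1=f,\dots,g_k$ with $\delta_ag_i\in A(g_1,\dots,g_k)$ for all $i$ and $a\in\Sigma$. *)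

From mathcomp Require Import all_boot all_algebra.
Set Implicit Arguments. Unset Strict Implicit. Unset Printing Implicit Defensive.
Import GRing.Theory.
Local Open Scope ring_scope.

Definition series (S : finType) := seq S -> rat.

Definition szero (S : finType) : series S := fun _ => 0.
Definition sscale (S : finType) (c : rat) (f : series S) : series S := fun w => c * f w.
Definition sadd (S : finType) (f g : series S) : series S := fun w => f w + g w.
Definition sdelta (S : finType) (a : S) (f : series S) : series S := fun w => f (a :: w).

Inductive term (X : Type) : Type :=
  | TVar of X
  | TZero
  | TScale of rat & term X
  | TAdd of term X & term X
  | TMul of term X & term X.

Inductive pvar : Type := VX | VDX | VY | VDY.

Definition product_rule := term pvar.

Fixpoint eval (S : finType) (X : Type) (mul : series S -> series S -> series S)
    (rho : X -> series S) (t : term X) : series S :=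
  match t with
  | TVar x => rho x
  | TZero => @szero S
  | TScale c u => sscale c (eval mul rho u)
  | TAdd u v => sadd (eval mul rho u) (eval mul rho v)
  | TMul u v => mul (eval mul rho u) (eval mul rho v)
  end.

Definition prho (S : finType) (a : S) (f g : series S) : pvar -> series S :=
  fun v => match v with
           | VX => f | VDX => sdelta a f | VY => g | VDY => sdelta a g end.

(* Approximants of the P-product: `mulN n f g` is correct on words of
   length < n (it is defined by recursion on word length, following
   (f*g)_eps = f_eps g_eps and delta_a (f*g) = [[P]]_[x:=f, xdot:=delta_a f,
   y:=g, ydot:=delta_a g]). *)
Fixpoint mulN (S : finType) (P : product_rule) (n : nat) (f g : series S)
    : series S :=
  match n with
  | 0 => fun _ => f [::] * g [::]
  | n'.+1 => fun w => match w with
                      | [::] => f [::] * g [::]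
                      | a :: w' => eval (mulN P n') (prho a f g) P w'
                      end
  end.

Definition pmul (S : finType) (P : product_rule) (f g : series S) : series S :=
  fun w => mulN P (size w).+1 f g w.

Definition psem (S : finType) (P : product_rule) (X : Type)
    (rho : X -> series S) (t : term X) : series S := eval (pmul P) rho t.

Inductive inA (S : finType) (P : product_rule) (k : nat) (gs : 'I_k -> series S)
    : series S -> Prop :=
  | inA_zero : inA P gs (@szero S)
  | inA_gen : forall i, inA P gs (gs i)
  | inA_scale : forall c f, inA P gs f -> inA P gs (sscale c f)
  | inA_add : forall f h, inA P gs f -> inA P gs h -> inA P gs (sadd f h)
  | inA_mul : forall f h, inA P gs f -> inA P gs h -> inA P gs (pmul P f h).

Definition Pfinite (S : finType) (P : product_rule) (f : series S) : Prop :=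
  exists (k : nat) (gs : 'I_k.+1 -> series S),
    gs ord0 = f /\ forall (i : 'I_k.+1) (a : S), inA P gs (sdelta a (gs i)).

From mathcomp Require Import all_boot all_algebra.
From Stdlib Require List.
Import List (In, incl, concat, in_concat, in_map, in_map_iff).

(* A P-finite series is one that lies in a finite list of series closed under
   every [delta_a] up to the algebra A generated by the list.  Concatenating
   such lists for all the [f_a] and putting [g] in front gives such a list for
   [g], since [delta_a g = f_a] is already a generator. *)

Set Implicit Arguments.
Unset Strict Implicit.

Lemma InP (T : eqType) (x : T) (s : seq T) : reflect (In x s) (x \in s).
Proof.
elim: s => [|y s IHs]; first by right.
rewrite in_cons; apply: (iffP orP) => [[/eqP->|/IHs]|[->|/IHs]]; by [left|right].
Qed.

Lemma In_enum (T : finType) (x : T) : In x (enum T).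
Proof. by apply/InP; rewrite mem_enum. Qed.

Lemma nth_In (T : Type) (x0 : T) (s : seq T) (i : nat) :
  (i < size s)%N -> In (nth x0 s i) s.
Proof. by elim: s i => [|y s IHs] [|i] //= lt_i_s; [left | right; apply: IHs]. Qed.

Lemma In_nth (T : Type) (x0 : T) (s : seq T) (x : T) :
  In x s -> exists2 i, (i < size s)%N & nth x0 s i = x.
Proof.
elim: s => [|y s IHs] //= [->|/IHs[i lt_i_s <-]]; first by exists 0%N.
by exists i.+1.
Qed.

Section Generated.
Variables (S : finType) (P : product_rule).

Lemma inA_trans k m (gs : 'I_k -> series S) (hs : 'I_m -> series S) f :
  (forall i, inA P hs (gs i)) -> inA P gs f -> inA P hs f.
Proof.
move=> gs_hs; elim=> *; by [apply: inA_zero | apply: gs_hs | apply: inA_scale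
  | apply: inA_add | apply: inA_mul].
Qed.

Definition generated (l : seq (series S)) : series S -> Prop :=
  inA P (fun i : 'I_(size l) => nth (@szero S) l i).

Lemma generated_In l f : In f l -> generated l f.
Proof.
move=> /(In_nth (@szero S))[i lt_i_l <-].
exact: (inA_gen _ (fun i : 'I_(size l) => nth _ l i) (Ordinal lt_i_l)).
Qed.

Lemma generated_incl l1 l2 f : incl l1 l2 -> generated l1 f -> generated l2 f.
Proof. by move=> l12; apply: inA_trans => i; apply/generated_In/l12/nth_In. Qed.

Definition delta_closed (l : seq (series S)) :=
  forall f, In f l -> forall a, generated l (sdelta a f).

Lemma Pfinite_delta_closed f :
  Pfinite P f -> exists l, In f l /\ delta_closed l.
Proof.
move=> [k [gs [<- gs_closed]]].
have gs_In i : In (gs i) (List.map gs (enum 'I_k.+1)) by apply/in_map/In_enum.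
exists (List.map gs (enum 'I_k.+1)); split=> // _ /in_map_iff[i [<- _]] a.
by apply: inA_trans (gs_closed i a) => j; apply: generated_In.
Qed.

Lemma delta_closed_Pfinite f l : delta_closed (f :: l) -> Pfinite P f.
Proof.
move=> closed_fl; exists (size l), (fun i => nth (@szero S) (f :: l) i).
by split=> // i a; apply/closed_fl/nth_In.
Qed.

Lemma delta_closed_cons f l :
  delta_closed l -> (forall a, generated l (sdelta a f)) ->
  delta_closed (f :: l).
Proof.
have l_fl : incl l (f :: l) by move=> h; right.
move=> closed_l gen_f h [<-|h_l] a; apply: generated_incl l_fl _; first exact: gen_f.
exact: closed_l.
Qed.

Lemma delta_closed_concat (ls : seq (seq (series S))) :
  (forall l, In l ls -> delta_closed l) -> delta_closed (concat ls).
Proof.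
move=> closed_ls f /in_concat[l [l_ls f_l]] a.
apply: generated_incl (closed_ls l l_ls f f_l a) => h h_l.
by apply/in_concat; exists l.
Qed.

End Generated.

Theorem mainTheorem19 (S : finType) (P : product_rule) (fs : S -> series S)
    (g : series S) :
  (forall a : S, Pfinite P (fs a)) ->
  (forall a : S, sdelta a g = fs a) ->
  Pfinite P g.
Proof.
move=> fs_fin delta_g.
have [ls ls_fs] := fin_all_exists (fun a => Pfinite_delta_closed (fs_fin a)).
set l := concat (List.map ls (enum S)).
have ls_l a : incl (ls a) l.
  by move=> h h_ls; apply/in_concat; exists (ls a); split=> //; apply/in_map/In_enum.
apply: (@delta_closed_Pfinite _ _ _ l); apply: delta_closed_cons => [|a].
- by apply: delta_closed_concat => _ /in_map_iff[a [<- _]]; case: (ls_fs a).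
- by rewrite delta_g; apply/generated_In/(ls_l a); case: (ls_fs a).
Qed.
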